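(* Let $(X,\sigma,\tau)$ be a Lorentzian metric space which is separable, chronologically dense and satisfies the S-property. Then $(\overline{X},\sigma_{chr},\overline{\tau})$ is also a Lorentzian metric space; that is, $\overline{\tau}:\overline{X}\times\overline{X}\to[0,\infty]$ is lower semicontinuous with respect to $\sigma_{chr}$, and $\overline{\tau}(a,c)\geq\overline{\tau}(a,b)+\overline{\tau}(b,c)$ whenever $\overline{\tau}(a,b)>0$ and $\overline{\tau}(b,c)>0$.
   Context: A Lorentzian metric space $(X,\sigma,\tau)$ is a topological space $(X,\sigma)$ together with a function $\tau:X\times X\to[0,\infty]$ which is lower semicontinuous (with respect to the product topology) and satisfies $\tau(x,z)\geq\tau(x,y)+\tau(y,z)$ whenever $\tau(x,y)>0$ and $\tau(y,z)>0$. Write $x\ll y$ iff $\tau(x,y)>0$, $I^+(x)=\{y:x\ll y\}$, $I^-(x)=\{y:y\ll x\}$, and $I^\pm[A]=\bigcup_{a\in A}I^\pm(a)$ for $A\subset X$. A future (resp. past) chain is a sequence $\{x_n\}$ with $x_n\ll x_{n+1}$ (resp. $x_{n+1}\ll x_n$) for all $n$. $X$ is separable if there is a countable $S\subset X$ such that whenever $x\ll y$ there is $s\in S$ with $x\ll s\ll y$. $X$ is chronologically dense if every $x$ with $I^-(x)\neq\emptyset$ is the $\sigma$-limit of some future chain, and every $x$ with $I^+(x)\neq\emptyset$ is the $\sigma$-limit of some past chain. A past set is $P\subset X$ with $P=I^-[P]$; the common past of $S\subset X$ is $\downarrow S=I^-[\{p: p\ll q\ \forall q\in S\}]$. An IP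 (indecomposable past set) is a past set that cannot be written as the union of two proper subsets which are both past sets; a PIP is an IP of the form $I^-(p)$. Future sets, $\uparrow S$, IFs and PIFs are defined dually (exchanging past and future). For a nonempty IP $P$ and a nonempty IF $F$, write $P\sim_S F$ iff $P$ is a maximal IP contained in $\downarrow F$ and $F$ is a maximal IF contained in $\uparrow P$; write $P\sim_S\emptyset$ (resp. $\emptyset\sim_S F$) if the nonempty IP $P$ (resp. nonempty IF $F$) is not S-related to any nonempty IF (resp. IP). $X$ satisfies the S-property if for every $x\in X$, $I^-(x)\sim_S I^+(x)$, no PIF other than $I^+(x)$ is S-related to $I^-(x)$, and no PIP other than $I^-(x)$ is S-related to $I^+(x)$. The c-completion is $\overline{X}=\{(P,F): P\sim_S F\}$ (with $P$ an IP or $\emptyset$, $F$ an IF or $\emptyset$), with $\mathbf{i}(x)=(I^-(x),I^+(x))$ and c-boundary $\partial X=\overline{X}\setminus\mathbf{i}(X)$. For a sequence $\{(P_n,F_n)\}$ in $\overline{X}$, define $L(\{(P_n,F_n)\})$ as the set of $(P,F)\in\overline{X}$ such that: if $P\neq\emptyset$, then $P\subset LI(P_n)$ and $P$ is a maximal IP contained in $LS(P_n)$; and if $F\neq\emptyset$, then $F\subset LI(F_n)$ and $F$ is a maximal IF contained in $LS(F_n)$. Here $LI(A_n)=\bigcup_n\bigcap_{k\geq n}A_k$ and $LS(A_n)=\bigcap_n\bigcup_{k\geq n}A_k$. The chronological topology $\sigma_{chr}$ on $\overline{X}$ is the topology whose closed sets are the $C\subset\overline{X}$ with $L(s)\subset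 C$ for every sequence $s$ in $C$. For $(P,F),(P',F')\in\overline{X}$, $\overline{\tau}((P,F),(P',F'))=0$ if $F=\emptyset$ or $P'=\emptyset$, and otherwise $\overline{\tau}((P,F),(P',F'))=\lim_n\tau(q_n,p'_n)$, where $\{q_n\}$ is a past chain with $F=I^+[\{q_n\}]$ and $\{p'_n\}$ is a future chain with $P'=I^-[\{p'_n\}]$. (In a separable $X$, every nonempty IP is the past of a future chain and every nonempty IF is the future of a past chain; the limit exists and is independent of the chains.) *)

From HB Require Import structures.
From mathcomp Require Import all_boot all_order all_algebra.
From mathcomp Require Import all_classical all_reals all_analysis.
Set Implicit Arguments. Unset Strict Implicit. Unset Printing Implicit Defensive.
Import Order.TTheory GRing.Theory Num.Theory.
Local Open Scope classical_set_scope.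
Local Open Scope ereal_scope.

Section LMS.
Context {X : Type} {R : realType} (tau : X -> X -> \bar R).

Definition chr (x y : X) : Prop := 0 < tau x y.

Definition Ipast (x : X) : set X := [set y | chr y x].
Definition Ifut (x : X) : set X := [set y | chr x y].
Definition IpastS (A : set X) : set X := [set y | exists2 a, A a & chr y a].
Definition IfutS (A : set X) : set X := [set y | exists2 a, A a & chr a y].

Definition future_chain (u : nat -> X) : Prop := forall n, chr (u n) (u n.+1).
Definition past_chain (u : nat -> X) : Prop := forall n, chr (u n.+1) (u n).

Definition separable : Prop :=
  exists S : set X, countable S /\
    forall x y, chr x y -> exists2 s, S s & chr x s /\ chr s y.

Definition past_set (P : set X) : Prop := P = IpastS P.
Definition future_set (F : set X) : Prop := F = IfutS F.

Definition cpast (S : set X) : set X :=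
  IpastS [set p | forall q, S q -> chr p q].
Definition cfut (S : set X) : set X :=
  IfutS [set p | forall q, S q -> chr q p].

Definition IP (P : set X) : Prop :=
  past_set P /\ ~ (exists A B : set X, past_set A /\ past_set B /\
                     A `<` P /\ B `<` P /\ P = A `|` B).
Definition IF (F : set X) : Prop :=
  future_set F /\ ~ (exists A B : set X, future_set A /\ future_set B /\
                     A `<` F /\ B `<` F /\ F = A `|` B).

Definition maxIP_in (P S : set X) : Prop :=
  IP P /\ P `<=` S /\ forall P', IP P' -> P `<=` P' -> P' `<=` S -> P' = P.
Definition maxIF_in (F S : set X) : Prop :=
  IF F /\ F `<=` S /\ forall F', IF F' -> F `<=` F' -> F' `<=` S -> F' = F.

Definition Srel (P F : set X) : Prop :=
  P !=set0 /\ F !=set0 /\ maxIP_in P (cpast F) /\ maxIF_in F (cfut P).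

Definition simS (P F : set X) : Prop :=
  Srel P F
  \/ (F = set0 /\ P !=set0 /\ IP P /\ forall F', F' !=set0 -> IF F' -> ~ Srel P F')
  \/ (P = set0 /\ F !=set0 /\ IF F /\ forall P', P' !=set0 -> IP P' -> ~ Srel P' F).

Definition S_property : Prop :=
  forall x, [/\ simS (Ipast x) (Ifut x),
     (forall y, simS (Ipast x) (Ifut y) -> Ifut y = Ifut x) &
     (forall y, simS (Ipast y) (Ifut x) -> Ipast y = Ipast x)].

Definition Xbar : Type := {pf : set X * set X | simS pf.1 pf.2}.
Definition Pof (a : Xbar) : set X := (proj1_sig a).1.
Definition Fof (a : Xbar) : set X := (proj1_sig a).2.

Definition LI (A : nat -> set X) : set X :=
  [set x | exists n, forall k, (n <= k)%N -> A k x].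
Definition LS (A : nat -> set X) : set X :=
  [set x | forall n, exists2 k, (n <= k)%N & A k x].

Definition Lim (s : nat -> Xbar) : set Xbar :=
  [set a | (Pof a !=set0 -> Pof a `<=` LI (Pof \o s) /\ maxIP_in (Pof a) (LS (Pof \o s)))
        /\ (Fof a !=set0 -> Fof a `<=` LI (Fof \o s) /\ maxIF_in (Fof a) (LS (Fof \o s)))].

Definition chr_closed (C : set Xbar) : Prop :=
  forall s : nat -> Xbar, (forall n, C (s n)) -> Lim s `<=` C.
Definition chr_open (U : set Xbar) : Prop := chr_closed (~` U).

Definition chr_prod_open (W : set (Xbar * Xbar)) : Prop :=
  forall ab, W ab -> exists U V : set Xbar,
    [/\ chr_open U, chr_open V, U ab.1, V ab.2 & U `*` V `<=` W].

Definition taubar (a b : Xbar) : \bar R :=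
  match pselect (Fof a = set0 \/ Pof b = set0) with
  | left _ => 0
  | right _ =>
      xget 0 [set v : \bar R | exists q p : nat -> X,
        [/\ past_chain q, Fof a = IfutS (range q),
            future_chain p, Pof b = IpastS (range p) &
            (fun n => tau (q n) (p n)) @ \oo --> v]]
  end.

End LMS.

Definition lsc_wrt {T : Type} {R : realType} (op : set T -> Prop)
  (f : T -> \bar R) : Prop :=
  forall a : R, op [set t | a%:E < f t].

From HB Require Import structures.
From mathcomp Require Import all_boot all_order all_algebra.
From mathcomp Require Import all_classical all_reals all_analysis.
Set Implicit Arguments. Unset Strict Implicit. Unset Printing Implicit Defensive.
Import Order.TTheory GRing.Theory Num.Theory.
Local Open Scope classical_set_scope.
Local Open Scope ereal_scope.

(* Separability makes every nonempty IP the past of a future chain [p] and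
   every nonempty IF the future of a past chain [q]; along such chains
   [tau (q n) (p n)] is nondecreasing, so [taubar] is the supremum of [tau]
   over [F x P'].  Lower semicontinuity then holds because, for fixed points
   [x] and [y], the sets [[set a | Fof a x]] and [[set b | Pof b y]] are
   chronologically open: the limit condition forces [F `<=` LI (F_n)].  The
   reverse triangle inequality comes from [P `<=` cpast F] for [(P, F)] in
   the completion and the reverse triangle inequality of [tau] along the
   chains. *)

Lemma countable_enum {T : Type} (S : set T) :
  countable S -> S !=set0 -> exists f : nat -> T, S = range f.
Proof.
by case/pfcard_geP => [->|/surjfunPex[f ->]] [s Ss]; last by exists f.
Qed.

Lemma dependent_choice_nat {T : Type} (A : set T) (Rn : nat -> T -> T -> Prop)
    (x0 : T) :
  A x0 -> (forall n x, A x -> exists2 y, A y & Rn n x y) ->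
  exists u : nat -> T, forall n, A (u n) /\ Rn n (u n) (u n.+1).
Proof.
move=> Ax0 step.
have step' (nx : nat * T) : exists y, A nx.2 -> A y /\ Rn nx.1 nx.2 y.
  case: nx => n x /=; have [Ax|nAx] := pselect (A x); last by exists x.
  by have [y Ay Rxy] := step n x Ax; exists y.
have [g hg] := choice step'.
pose u := nat_rect (fun _ => T) x0 (fun n x => g (n, x)).
have Au n : A (u n) by elim: n => //= n IH; exact: (hg (n, _) IH).1.
by exists u => n; split => //; exact: (hg (n, _) (Au n)).2.
Qed.

Lemma separable_flip {X : Type} {R : realType} (tau : X -> X -> \bar R) :
  separable tau -> separable (fun x y => tau y x).
Proof. by case=> S [cS hS]; exists S; split => // x y /hS [s Ss [ys sx]]; exists s. Qed.

Section ChronologicalPastSets.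
Context {X : Type} {R : realType} (tau : X -> X -> \bar R).
Hypothesis chr_trans : forall x y z, chr tau x y -> chr tau y z -> chr tau x z.

Lemma IpastS_sub (P S : set X) : past_set tau P -> S `<=` P -> IpastS tau S `<=` P.
Proof. by move=> hP hS y [a /hS Pa ya]; rewrite hP; exists a. Qed.

Lemma cpast_chr (S : set X) x y : cpast tau S y -> S x -> chr tau y x.
Proof. by case=> r hr yr Sx; exact: chr_trans yr (hr _ Sx). Qed.

Lemma past_chain_chr (q : nat -> X) x m n :
  past_chain tau q -> (m <= n)%N -> chr tau (q m) x -> chr tau (q n) x.
Proof.
move=> hq /subnK <-; elim: (n - m)%N => [//|k IH] /IH qx.
by rewrite addSn; exact: chr_trans (hq _) qx.
Qed.

Hypothesis tau_sep : separable tau.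

Lemma separable_interpolate x y : chr tau x y -> exists2 s, chr tau x s & chr tau s y.
Proof. by case: tau_sep => S [_ hS] /hS [s _ [xs sy]]; exists s. Qed.

Lemma past_set_IpastS (S : set X) : past_set tau (IpastS tau S).
Proof.
apply/seteqP; split => y.
  by case=> a Sa /separable_interpolate [s ys sa]; exists s => //; exists a.
by case=> b [a Sa ba] yb; exists a => //; exact: chr_trans yb ba.
Qed.

(* If [x] and [y] had no common future in [P], then [P] would split into the
   past of [P `&` Ifut x] and the past of the rest. *)
Lemma IP_directed (P : set X) x y : IP tau P -> P x -> P y ->
  exists2 z, P z & chr tau x z /\ chr tau y z.
Proof.
case=> hP hind Px Py; apply: contrapT => nodir; apply: hind.
pose A := IpastS tau (P `&` Ifut tau x).
pose B := IpastS tau (P `\` A).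
have AP : A `<=` P by apply: IpastS_sub => // z [].
have BP : B `<=` P by apply: IpastS_sub => // z [].
have pA : past_set tau A by exact: past_set_IpastS.
exists A, B; split => //; split; first exact: past_set_IpastS.
split; first by split => // /(_ y Py) [z [Pz xz] yz]; apply: nodir; exists z.
split.
  split => // /(_ x Px) [b [Pb nAb] xb]; apply: nAb.
  move: Pb; rewrite hP => -[b' Pb' bb'].
  by exists b' => //; split => //; exact: chr_trans xb bb'.
apply/seteqP; split => [p|p [/AP|/BP]//].
rewrite {1}hP => -[p' Pp' pp'].
have [Ap'|nAp'] := pselect (A p'); last by right; exists p'.
by left; rewrite pA; exists p'.
Qed.

(* The chain climbs above the [n]-th point of the countable dense set as soon
   as that point lies in [P]. *)
Lemma IP_future_chain (P : set X) : IP tau P -> P !=set0 ->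
  exists p, future_chain tau p /\ P = IpastS tau (range p).
Proof.
move=> hIP [p0 Pp0]; have hP := hIP.1.
have [S [cS hS]] := tau_sep.
have [f Sf] : exists f : nat -> X, S = range f.
  apply: countable_enum cS _.
  by move: Pp0; rewrite hP => -[p1 _ /hS [s Ss _]]; exists s.
have step n c : P c ->
    exists2 c', P c' & chr tau c c' /\ (P (f n) -> chr tau (f n) c').
  move=> Pc; have [Pf|nPf] := pselect (P (f n)).
    by have [z Pz [cz fz]] := IP_directed hIP Pc Pf; exists z.
  by have [z Pz [cz _]] := IP_directed hIP Pc Pc; exists z.
have [p hp] := dependent_choice_nat
  (Rn := fun n c c' => chr tau c c' /\ (P (f n) -> chr tau (f n) c')) Pp0 step.
exists p; split; first by move=> n; exact: (hp n).2.1.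
apply/seteqP; split; last by apply: IpastS_sub => // _ [n _ <-]; exact: (hp n).1.
move=> y; rewrite {1}hP => -[y' Py' /hS [s Ss [ys sy']]].
move: Ss; rewrite Sf => -[n _ fns].
have Pfn : P (f n) by rewrite hP; exists y'; rewrite ?fns.
exists (p n.+1); first by exists n.+1.
by apply: chr_trans ys _; rewrite -fns; exact: (hp n).2.2 Pfn.
Qed.

End ChronologicalPastSets.

Lemma IF_past_chain {X : Type} {R : realType} (tau : X -> X -> \bar R)
    (chr_trans : forall x y z, chr tau x y -> chr tau y z -> chr tau x z)
    (tau_sep : separable tau) (F : set X) :
  IF tau F -> F !=set0 -> exists q, past_chain tau q /\ F = IfutS tau (range q).
Proof.
exact: (@IP_future_chain _ _ (fun x y => tau y x)
  (fun x y z xy yz => chr_trans _ _ _ yz xy) (separable_flip tau_sep) F).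
Qed.

Lemma future_chain_chr {X : Type} {R : realType} (tau : X -> X -> \bar R)
    (chr_trans : forall x y z, chr tau x y -> chr tau y z -> chr tau x z)
    (p : nat -> X) y m n :
  future_chain tau p -> (m <= n)%N -> chr tau y (p m) -> chr tau y (p n).
Proof.
exact: (@past_chain_chr _ _ (fun x y => tau y x)
  (fun x y z xy yz => chr_trans _ _ _ yz xy)).
Qed.

Lemma IfutS_chain {X : Type} {R : realType} (tau : X -> X -> \bar R)
    (q : nat -> X) n :
  past_chain tau q -> IfutS tau (range q) (q n).
Proof. by move=> hq; exists (q n.+1); [exists n.+1 | exact: hq]. Qed.

Lemma IpastS_chain {X : Type} {R : realType} (tau : X -> X -> \bar R)
    (p : nat -> X) n :
  future_chain tau p -> IpastS tau (range p) (p n).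
Proof. by move=> hp; exists (p n.+1); [exists n.+1 | exact: hp]. Qed.

Definition tau_sup {X : Type} {R : realType} (tau : X -> X -> \bar R)
    (F P : set X) : \bar R :=
  ereal_sup [set tau x y | x in F & y in P].

Section ReverseTriangle.
Context {X : Type} {R : realType} (tau : X -> X -> \bar R).
Hypothesis tau_ge0 : forall x y, 0 <= tau x y.
Hypothesis tau_rev : forall x y z, 0 < tau x y -> 0 < tau y z ->
  tau x y + tau y z <= tau x z.

Lemma chr_trans x y z : chr tau x y -> chr tau y z -> chr tau x z.
Proof. by move=> xy yz; exact: lt_le_trans (adde_gt0 xy yz) (tau_rev xy yz). Qed.

Lemma tau_chr_le_l a x y : chr tau a x -> tau x y <= tau a y.
Proof.
move=> ax; have [xy|xy] := leP (tau x y) 0; first exact: le_trans xy (tau_ge0 _ _).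
exact: le_trans (lee_paddl (tau_ge0 a x) (lexx _)) (tau_rev ax xy).
Qed.

Lemma tau_chr_le_r x y b : chr tau y b -> tau x y <= tau x b.
Proof.
move=> yb; have [xy|xy] := leP (tau x y) 0; first exact: le_trans xy (tau_ge0 _ _).
exact: le_trans (lee_paddr (tau_ge0 y b) (lexx _)) (tau_rev xy yb).
Qed.

Lemma tau_add_le x y x' y' : chr tau y x' -> 0 < tau x y -> 0 < tau x' y' ->
  tau x y + tau x' y' <= tau x y'.
Proof.
move=> yx' xy x'y'; have yy' := tau_chr_le_l y' yx'.
by apply: le_trans (tau_rev xy (lt_le_trans x'y' yy')); rewrite leeD2l.
Qed.

Lemma tau_sup_ge (F P : set X) x y : F x -> P y -> tau x y <= tau_sup tau F P.
Proof. by move=> Fx Py; apply: ereal_sup_ubound; exists x => //; exists y. Qed.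

Lemma nondecreasing_tau_chain (q p : nat -> X) :
  past_chain tau q -> future_chain tau p ->
  nondecreasing_seq (fun n => tau (q n) (p n)).
Proof.
move=> hq hp; apply/nondecreasing_seqP => n.
exact: le_trans (tau_chr_le_l _ (hq n)) (tau_chr_le_r _ (hp n)).
Qed.

Lemma cvg_tau_chain (q p : nat -> X) :
  past_chain tau q -> future_chain tau p ->
  (fun n => tau (q n) (p n)) @ \oo -->
    tau_sup tau (IfutS tau (range q)) (IpastS tau (range p)).
Proof.
move=> hq hp.
suff -> : tau_sup tau (IfutS tau (range q)) (IpastS tau (range p)) =
    ereal_sup (range (fun n => tau (q n) (p n))).
  exact/ereal_nondecreasing_cvgn/nondecreasing_tau_chain.
apply/le_anti/andP; split; last first.
  apply: ge_ereal_sup => _ [n _ <-].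
  exact: tau_sup_ge (IfutS_chain _ hq) (IpastS_chain _ hp).
apply: ge_ereal_sup => _ [x [_ [m _ <-] qx] [y [_ [k _ <-] yp] <-]].
have qnx : chr tau (q (m + k)%N) x := past_chain_chr chr_trans hq (leq_addr k m) qx.
have ypn : chr tau y (p (m + k)%N) := future_chain_chr chr_trans hp (leq_addl m k) yp.
apply: le_trans (tau_chr_le_l _ qnx) _; apply: le_trans (tau_chr_le_r _ ypn) _.
by apply: ereal_sup_ubound; exists (m + k)%N.
Qed.

End ReverseTriangle.

Section CompletionTimeSeparation.
Context {X : Type} {R : realType} (tau : X -> X -> \bar R).

Lemma simS_IP (P F : set X) : simS tau P F -> P !=set0 -> IP tau P.
Proof. by case=> [[_ [_ [[] //]]]|[[_ [_ []]]//|[-> _] []]]. Qed.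

Lemma simS_IF (P F : set X) : simS tau P F -> F !=set0 -> IF tau F.
Proof. by case=> [[_ [_ [_ []]]]//|[[-> _] []|[_ [_ []]]//]]. Qed.

Lemma simS_sub_cpast (P F : set X) : simS tau P F -> F !=set0 -> P `<=` cpast tau F.
Proof. by case=> [[_ [_ [[_ []]]]]//|[[-> _] []|[-> _] _ _ []]]. Qed.

Lemma Xbar_simS (a : Xbar tau) : simS tau (Pof a) (Fof a).
Proof. exact: proj2_sig a. Qed.

Lemma chr_open_setT : chr_open [set: Xbar tau].
Proof. by move=> s /(_ 0%N) /(_ I). Qed.

Lemma chr_open_Fof x : chr_open [set a : Xbar tau | Fof a x].
Proof.
move=> s hs a [_ Fa] Fax; have [/(_ x Fax) [n Fsx] _] := Fa (ex_intro _ x Fax).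
exact: hs n (Fsx n (leqnn n)).
Qed.

Lemma chr_open_Pof y : chr_open [set a : Xbar tau | Pof a y].
Proof.
move=> s hs a [Pa _] Pay; have [/(_ y Pay) [n Psy] _] := Pa (ex_intro _ y Pay).
exact: hs n (Psy n (leqnn n)).
Qed.

Lemma taubar_set0 (a b : Xbar tau) : Fof a = set0 \/ Pof b = set0 -> taubar a b = 0.
Proof. by rewrite /taubar; case: pselect. Qed.

Lemma taubar_gt0_nonempty (a b : Xbar tau) :
  0 < taubar a b -> Fof a !=set0 /\ Pof b !=set0.
Proof.
move=> ab; split; apply: contrapT => /nonemptyPn ab0;
  move: ab; rewrite taubar_set0 ?ltxx //; by [left | right].
Qed.

Hypothesis tau_ge0 : forall x y, 0 <= tau x y.
Hypothesis tau_rev : forall x y z, 0 < tau x y -> 0 < tau y z ->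
  tau x y + tau y z <= tau x z.
Hypothesis tau_sep : separable tau.

Lemma Fof_past_chain (a : Xbar tau) : Fof a !=set0 ->
  exists q, past_chain tau q /\ Fof a = IfutS tau (range q).
Proof.
move=> Fa.
exact: (IF_past_chain (chr_trans tau_rev) tau_sep (simS_IF (Xbar_simS a) Fa) Fa).
Qed.

Lemma Pof_future_chain (a : Xbar tau) : Pof a !=set0 ->
  exists p, future_chain tau p /\ Pof a = IpastS tau (range p).
Proof.
move=> Pa.
exact: (IP_future_chain (chr_trans tau_rev) tau_sep (simS_IP (Xbar_simS a) Pa) Pa).
Qed.

Lemma taubar_sup (a b : Xbar tau) : Fof a !=set0 -> Pof b !=set0 ->
  taubar a b = tau_sup tau (Fof a) (Pof b).
Proof.
move=> Fa Pb; rewrite /taubar; case: pselect => [[F0|P0]|_].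
- by case: Fa; rewrite F0.
- by case: Pb; rewrite P0.
have [q [hq Fq]] := Fof_past_chain Fa.
have [p [hp Pp]] := Pof_future_chain Pb.
apply: xget_unique; first by exists q, p; split => //; rewrite Fq Pp; exact: cvg_tau_chain.
move=> v [q' [p' [hq' -> hp' -> cv]]].
exact: cvg_unique cv (cvg_tau_chain tau_ge0 tau_rev hq' hp').
Qed.

Lemma taubar_ge0 (a b : Xbar tau) : 0 <= taubar a b.
Proof.
have [[x Fx]|/nonemptyPn Fa0] := pselect (Fof a !=set0);
  last by rewrite taubar_set0 //; left.
have [[y Py]|/nonemptyPn Pb0] := pselect (Pof b !=set0);
  last by rewrite taubar_set0 //; right.
rewrite taubar_sup; [|by exists x|by exists y].
exact: le_trans (tau_ge0 x y) (tau_sup_ge tau Fx Py).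
Qed.

Lemma taubar_lsc :
  lsc_wrt (chr_prod_open (tau := tau)) (fun ab : Xbar tau * Xbar tau => taubar ab.1 ab.2).
Proof.
move=> r [a b] /= rab; have [r0|r0] := ltP r 0%R.
  exists setT, setT; split => //; [exact: chr_open_setT..|].
  by move=> [a' b'] _ /=; apply: lt_le_trans (taubar_ge0 a' b'); rewrite lte_fin.
have [Fa Pb] := taubar_gt0_nonempty (le_lt_trans (lee_tofin r0) rab).
move: rab; rewrite taubar_sup // => /ereal_sup_gt [_ [x Fax [y Pby <-]] rxy].
exists [set a' | Fof a' x], [set b' | Pof b' y].
split => //; [exact: chr_open_Fof|exact: chr_open_Pof|].
move=> [a' b'] [/= Fx Py]; rewrite taubar_sup; [|by exists x|by exists y].
exact: lt_le_trans rxy (tau_sup_ge tau Fx Py).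
Qed.

Lemma taubar_rev (a b c : Xbar tau) : 0 < taubar a b -> 0 < taubar b c ->
  taubar a b + taubar b c <= taubar a c.
Proof.
move=> ab bc.
have [Fa Pb] := taubar_gt0_nonempty ab; have [Fb Pc] := taubar_gt0_nonempty bc.
have [q [hq Fq]] := Fof_past_chain Fa; have [p [hp Pp]] := Pof_future_chain Pb.
have [q' [hq' Fq']] := Fof_past_chain Fb; have [p' [hp' Pp']] := Pof_future_chain Pc.
have sum_le n : 0 < tau (q n) (p n) -> 0 < tau (q' n) (p' n) ->
    tau (q n) (p n) + tau (q' n) (p' n) <= taubar a c.
  move=> qp qp'; have pq' : chr tau (p n) (q' n).
    have Pbp : Pof b (p n) by rewrite Pp; exact: IpastS_chain.
    have Fbq : Fof b (q' n) by rewrite Fq'; exact: IfutS_chain.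
    exact: (cpast_chr (chr_trans tau_rev) (simS_sub_cpast (Xbar_simS b) Fb Pbp) Fbq).
  apply: le_trans (tau_add_le tau_ge0 tau_rev pq' qp qp') _.
  rewrite taubar_sup // Fq Pp'.
  exact: (tau_sup_ge tau (IfutS_chain n hq) (IpastS_chain n hp')).
have cv := cvg_tau_chain tau_ge0 tau_rev hq hp.
have cv' := cvg_tau_chain tau_ge0 tau_rev hq' hp'.
rewrite -Fq -Pp -taubar_sup // in cv; rewrite -Fq' -Pp' -taubar_sup // in cv'.
apply: cvge_to_le (cvgeD _ cv cv') _; first by apply: ge0_adde_def; rewrite inE ltW.
near=> n; apply: sum_le; near: n.
  exact: cv _ (open_ereal_gt' ab).
exact: cv' _ (open_ereal_gt' bc).
Unshelve. all: by end_near.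
Qed.

End CompletionTimeSeparation.

Theorem mainTheorem1 (R : realType) (X : topologicalType)
  (tau : X -> X -> \bar R)
  (tau_ge0 : forall x y, 0 <= tau x y)
  (tau_lsc : lower_semicontinuous (fun xy : X * X => tau xy.1 xy.2))
  (tau_rev : forall x y z, 0 < tau x y -> 0 < tau y z ->
             tau x y + tau y z <= tau x z)
  (hsep : separable tau)
  (hdense : forall x : X,
     (Ipast tau x !=set0 -> exists u : nat -> X, future_chain tau u /\ u @ \oo --> x) /\
     (Ifut tau x !=set0 -> exists u : nat -> X, past_chain tau u /\ u @ \oo --> x))
  (hS : S_property tau) :
  (forall a b : Xbar tau, 0 <= taubar a b) /\
  lsc_wrt (chr_prod_open (tau := tau)) (fun ab : Xbar tau * Xbar tau => taubar ab.1 ab.2) /\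
  (forall a b c : Xbar tau, 0 < taubar a b -> 0 < taubar b c ->
     taubar a b + taubar b c <= taubar a c).
Proof.
split; first exact: taubar_ge0.
split; first exact: taubar_lsc.
exact: taubar_rev.
Qed.
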